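(* Let $(X_{1,\infty},f_{1,\infty},\mu_{1,\infty})$ and $(Y_{1,\infty},g_{1,\infty},\nu_{1,\infty})$ be metric nonautonomous dynamical systems with admissible classes $\mathcal{E}$ (for $f_{1,\infty}$) and $\mathcal{F}$ (for $g_{1,\infty}$), respectively. Let $\pi_{1,\infty}=\{\pi_n\}$ be an $\mathcal{E}$-$\mathcal{F}$-semiconjugacy from $f_{1,\infty}$ to $g_{1,\infty}$. Then $h_{\mathcal{F}}(g_{1,\infty})\le h_{\mathcal{E}}(f_{1,\infty})$.
   Context: A metric NDS consists of probability spaces $(X_n,\mathcal{A}_n,\mu_n)$ and measurable maps $f_n:X_n\to X_{n+1}$ with $f_n\mu_n=\mu_{n+1}$. Notation: $f_k^n=f_{k+n-1}\circ\cdots\circ f_k$, $f_k^0=\mathrm{id}$, $f_k^{-n}$ = preimage under $f_k^n$. $H_\mu(\mathcal{P})=-\sum_P\mu(P)\log\mu(P)$; $h(f_{1,\infty};\mathcal{P}_{1,\infty})=\limsup_n\frac1nH_{\mu_1}(\bigvee_{i=0}^{n-1}f_1^{-i}\mathcal{P}_{i+1})$ for sequences $\mathcal{P}_{1,\infty}=\{\mathcal{P}_n\}$ of finite measurable partitions of $X_n$; $h_{\mathcal{E}}(f_{1,\infty})=\sup_{\mathcal{P}_{1,\infty}\in\mathcal{E}}h(f_{1,\infty};\mathcal{P}_{1,\infty})$. Admissible class: a nonempty class $\mathcal{E}$ of such sequences satisfying (A) each member has uniformly bounded cardinalities $\#\mathcal{P}_n\le N$; (B) closed under passing to coarser sequences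 (termwise coarser); (C) closed under $\mathcal{P}_{1,\infty}\mapsto\{\bigvee_{i=0}^{m-1}f_k^{-i}\mathcal{P}_{k+i}\}_{k\ge1}$ for every $m\ge1$. An $\mathcal{E}$-$\mathcal{F}$-semiconjugacy is a sequence of measurable maps $\pi_n:X_n\to Y_n$ with $\pi_n\mu_n=\nu_n$ and $\pi_{n+1}\circ f_n=g_n\circ\pi_n$ for all $n$, such that $\{\mathcal{P}_n\}\in\mathcal{F}$ implies $\{\pi_n^{-1}(\mathcal{P}_n)\}\in\mathcal{E}$. *)

From HB Require Import structures.
From mathcomp Require Import all_boot all_order all_algebra.
From mathcomp Require Import all_classical all_reals all_analysis.
Unset Printing Implicit Defensive.
Import Order.TTheory GRing.Theory Num.Theory.
Local Open Scope classical_set_scope.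
Local Open Scope ring_scope.

(* Metric nonautonomous dynamical systems (NDS), indexed from 0 instead of 1. *)

Section Partitions.
Context {d : measure_display} {T : measurableType d}.

Definition is_fpart (P : set (set T)) : Prop :=
  [/\ finite_set P,
      (forall A, P A -> measurable A /\ A !=set0),
      (forall A B, P A -> P B -> A `&` B !=set0 -> A = B) &
      (forall x, exists A, P A /\ A x)].

Definition card_le (P : set (set T)) (N : nat) : Prop :=
  exists e : 'I_N -> set T, P `<=` range e.

Definition coarser (Q P : set (set T)) : Prop :=
  forall A, P A -> exists B, Q B /\ A `<=` B.

Definition pjoin (P Q : set (set T)) : set (set T) :=
  [set C | exists A B, [/\ P A, Q B, C = A `&` B & C !=set0]].

Definition ptriv : set (set T) := [set setT].

End Partitions.

Definition ppre {d1 d2 : measure_display} {T1 : measurableType d1}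
  {T2 : measurableType d2} (g : T1 -> T2) (P : set (set T2)) : set (set T1) :=
  [set C | exists A, [/\ P A, C = g @^-1` A & C !=set0]].

Definition pentropy {R : realType} {d : measure_display} {T : measurableType d}
  (mu : probability T R) (P : set (set T)) : R :=
  - (\sum_(A \in P) fine (mu A) * ln (fine (mu A)))%R.

Definition pseq {dX : nat -> measure_display} (X : forall n, measurableType (dX n)) :=
  forall n, set (set (X n)).

Section NDS.
Context {dX : nat -> measure_display} {X : forall n, measurableType (dX n)}.
Variable (f : forall n, X n -> X n.+1).

Fixpoint fiter (k n : nat) : X k -> X (n + k)%N :=
  match n return X k -> X (n + k)%N with
  | 0 => fun x => x
  | n'.+1 => fun x => @f (n' + k)%N (@fiter k n' x)
  end.


Fixpoint itjoin (P : pseq X) (k m : nat) : set (set (X k)) :=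
  match m with
  | 0 => ptriv
  | m'.+1 => pjoin (itjoin P k m') (ppre (@fiter k m') (P (m' + k)%N))
  end.

Definition is_pseq (P : pseq X) : Prop := forall n, is_fpart (P n).

Definition admissible (E : set (pseq X)) : Prop :=
  [/\ E !=set0,
      (forall P, E P -> is_pseq P),
      (forall P, E P -> exists N, forall n, card_le (P n) N),
      (forall P Q, E P -> is_pseq Q -> (forall n, coarser (Q n) (P n)) -> E Q) &
      (forall P m, E P -> (1 <= m)%N -> E (fun k => itjoin P k m))].

Context {R : realType}.
Variable mu : forall n, probability (X n) R.

Definition is_mNDS : Prop :=
  forall n, measurable_fun setT (f n) /\
    (forall A, measurable A -> mu n.+1 A = mu n (f n @^-1` A)).

Definition hP (P : pseq X) : \bar R :=
  limn_esup (fun n => ((pentropy (mu 0) (itjoin P 0 n)) / n%:R)%:E).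

Definition hE (E : set (pseq X)) : \bar R := ereal_sup [set hP P | P in E].

End NDS.

Definition semiconj {R : realType}
  {dX : nat -> measure_display} {X : forall n, measurableType (dX n)}
  {dY : nat -> measure_display} {Y : forall n, measurableType (dY n)}
  (f : forall n, X n -> X n.+1) (g : forall n, Y n -> Y n.+1)
  (mu : forall n, probability (X n) R) (nu : forall n, probability (Y n) R)
  (E : set (pseq X)) (F : set (pseq Y)) (pi : forall n, X n -> Y n) : Prop :=
  [/\ (forall n, measurable_fun setT (pi n)),
      (forall n A, measurable A -> nu n A = mu n (pi n @^-1` A)),
      (forall n x, pi n.+1 (f n x) = g n (pi n x)) &
      (forall Q, F Q -> E (fun n => ppre (pi n) (Q n)))].

From HB Require Import structures.
From mathcomp Require Import all_boot all_order all_algebra.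
From mathcomp Require Import all_classical all_reals all_analysis.
Import Order.TTheory GRing.Theory Num.Theory.
Local Open Scope classical_set_scope.
Local Open Scope ring_scope.

(* For Q in F the pulled-back sequence pi^{-1} Q lies in E. The semiconjugacy
   identity pi o f_0^i = g_0^i o pi turns the refinements of pi^{-1} Q into
   the pull-backs of the refinements of Q, and pulling back along a
   measure-preserving map does not change the entropy of a partition.  Hence
   h(f; pi^{-1} Q) = h(g; Q), and the supremum over F is dominated by the one
   over E. *)

Definition disjoint_mcells {d} {T : measurableType d} (P : set (set T)) :=
  (forall A, P A -> measurable A) /\
  (forall A B, P A -> P B -> A `&` B !=set0 -> A = B).

Lemma fpart_disjoint_mcells {d} {T : measurableType d} (P : set (set T)) :
  is_fpart P -> disjoint_mcells P.
Proof. by move=> [_ mP dP _]; split => // A /mP []. Qed.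

Lemma probability_nonempty {R : realType} {d} {T : measurableType d}
  (mu : probability T R) : [set: T] !=set0.
Proof.
apply/set0P/negP => /eqP T0; have := probability_setT mu.
by rewrite T0 measure0 => -[] /eqP; rewrite eq_sym oner_eq0.
Qed.

Section Preimage_partition.
Context {d1 d2 d3 : measure_display} {T1 : measurableType d1}
  {T2 : measurableType d2} {T3 : measurableType d3}.

Lemma ppre_comp (a : T1 -> T2) (b : T2 -> T3) (P : set (set T3)) :
  ppre a (ppre b P) = ppre (b \o a) P.
Proof.
apply/funext => C; apply/propext; split.
- by move=> [_ [[A [PA -> _]] -> C0]]; exists A.
- move=> [A [PA -> [x Cx]]]; exists (b @^-1` A); split => //; last by exists x.
  by exists A; split => //; exists (a x).
Qed.

Lemma ppre_pjoin (h : T1 -> T2) (P Q : set (set T2)) :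
  ppre h (pjoin P Q) = pjoin (ppre h P) (ppre h Q).
Proof.
apply/funext => C; apply/propext; split.
- move=> [_ [[A [B [PA QB -> _]]] -> [x [Ax Bx]]]].
  exists (h @^-1` A), (h @^-1` B); split => //; last by exists x.
  + by exists A; split => //; exists x.
  + by exists B; split => //; exists x.
- move=> [_ [_ [[A [PA -> _]] [B [QB -> _]] -> [x [Ax Bx]]]]].
  exists (A `&` B); split => //; last by exists x.
  by exists A, B; split => //; exists (h x).
Qed.

Lemma ppre_ptriv (h : T1 -> T2) : [set: T1] !=set0 -> ppre h ptriv = ptriv.
Proof.
move=> [x _]; apply/funext => C; apply/propext; split; first by move=> [A [-> ->]].
by move=> ->; exists setT; split => //; exists x.
Qed.

Lemma disjoint_mcells_ptriv : disjoint_mcells (@ptriv _ T1).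
Proof. by split=> [A ->|A B -> ->]. Qed.

Lemma disjoint_mcells_pjoin (P Q : set (set T1)) :
  disjoint_mcells P -> disjoint_mcells Q -> disjoint_mcells (pjoin P Q).
Proof.
move=> [mP dP] [mQ dQ]; split.
- by move=> _ [A [B [PA QB -> _]]]; apply: measurableI; [exact: mP|exact: mQ].
- move=> _ _ [A [B [PA QB -> _]]] [A' [B' [PA' QB' -> _]]].
  move=> [x [[Ax Bx] [A'x B'x]]].
  have -> : A = A' by apply: dP => //; exists x.
  by have -> : B = B' by apply: dQ => //; exists x.
Qed.

Lemma disjoint_mcells_ppre (h : T1 -> T2) (P : set (set T2)) :
  measurable_fun setT h -> disjoint_mcells P -> disjoint_mcells (ppre h P).
Proof.
move=> mh [mP dP]; split.
- by move=> _ [A [PA -> _]]; rewrite -[h @^-1` A]setTI; apply: mh => //; exact: mP.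
- move=> _ _ [A [PA -> _]] [A' [PA' -> _]] [x [Ax A'x]].
  by have -> : A = A' by apply: dP => //; exists (h x).
Qed.

(* Cells of zero mass contribute nothing, and the remaining cells have
   nonempty, hence pairwise distinct, preimages. *)
Lemma pentropy_ppre {R : realType} (mu : probability T1 R)
  (nu : probability T2 R) (h : T1 -> T2) (P : set (set T2)) :
  disjoint_mcells P ->
  (forall A, measurable A -> nu A = mu (h @^-1` A)) ->
  pentropy mu (ppre h P) = pentropy nu P.
Proof.
move=> [mP dP] h_nu; rewrite /pentropy; congr (- _).
set e := fun r : \bar R => fine r * ln (fine r).
rewrite fsbig_supp [RHS]fsbig_supp.
rewrite (reindex_fsbig (fun B => h @^-1` B) (P `&` (e \o nu) @^-1` [set~ 0])).
  by apply: eq_fsbigr => B; rewrite inE => -[PB _] /=; rewrite h_nu //; exact: mP.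
have charged_pre0 B : P B -> e (nu B) != 0 -> h @^-1` B !=set0.
  move=> PB nz; apply/set0P/negP => /eqP hB0; move: nz.
  by rewrite /e h_nu ?hB0 ?measure0 /= ?mul0r ?eqxx //; exact: mP.
split.
- move=> B [PB /= nz]; split; last by rewrite /= -h_nu //; exact: mP.
  by exists B; split => //; apply: charged_pre0 => //; exact/eqP.
- move=> B B'; rewrite !inE => -[PB nz] [PB' _] eB; apply: dP => //.
  have [x Bx] := charged_pre0 B PB (introN eqP nz).
  by exists (h x); split => //; rewrite /= -[B' _]/((h @^-1` B') x) -eB.
- move=> _ [[A [PA -> _]] /= nz]; exists A => //; split => //=.
  by rewrite h_nu //; exact: mP.
Qed.

End Preimage_partition.

Section Refinement.
Context {dX : nat -> measure_display} {X : forall n, measurableType (dX n)}.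
Variable f : forall n, X n -> X n.+1.
Hypothesis mf : forall n, measurable_fun setT (f n).

Lemma measurable_fiter k m : measurable_fun setT (fiter f k m).
Proof.
elim: m => [|m IH] /=; first exact: measurable_id.
exact: measurableT_comp.
Qed.

Lemma disjoint_mcells_itjoin (P : pseq X) k m :
  (forall n, disjoint_mcells (P n)) -> disjoint_mcells (itjoin f P k m).
Proof.
move=> dP; elim: m => [|m IH] /=; first exact: disjoint_mcells_ptriv.
apply: disjoint_mcells_pjoin => //.
by apply: disjoint_mcells_ppre => //; exact: measurable_fiter.
Qed.

End Refinement.

Section Semiconjugacy.
Context {dX : nat -> measure_display} {X : forall n, measurableType (dX n)}.
Context {dY : nat -> measure_display} {Y : forall n, measurableType (dY n)}.
Variables (f : forall n, X n -> X n.+1) (g : forall n, Y n -> Y n.+1).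
Variable pi : forall n, X n -> Y n.
Hypothesis pi_f : forall n x, pi n.+1 (f n x) = g n (pi n x).

Lemma pi_fiter k m x : pi (m + k)%N (fiter f k m x) = fiter g k m (pi k x).
Proof. by elim: m => //= m IH; rewrite pi_f IH. Qed.

Lemma itjoin_ppre (Q : pseq Y) k m : [set: X k] !=set0 ->
  itjoin f (fun n => ppre (pi n) (Q n)) k m = ppre (pi k) (itjoin g Q k m).
Proof.
move=> Xk0; elim: m => [|m IH] /=; first by rewrite ppre_ptriv.
rewrite IH ppre_pjoin !ppre_comp; congr (pjoin _ (ppre _ _)).
by apply/funext => x /=; exact: pi_fiter.
Qed.

Lemma hP_ppre {R : realType} (mu : forall n, probability (X n) R)
  (nu : forall n, probability (Y n) R) (Q : pseq Y) :
  (forall n, measurable_fun setT (g n)) -> is_pseq Q ->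
  (forall A, measurable A -> nu 0%N A = mu 0%N (pi 0%N @^-1` A)) ->
  hP f mu (fun n => ppre (pi n) (Q n)) = hP g nu Q.
Proof.
move=> mg Qpart pi_mu; rewrite /hP; congr limn_esup; apply/funext => n.
rewrite itjoin_ppre; last exact: probability_nonempty (mu 0%N).
rewrite (pentropy_ppre _ (nu 0%N)) //.
by apply: disjoint_mcells_itjoin => // m; exact: fpart_disjoint_mcells.
Qed.

End Semiconjugacy.

Theorem mainTheorem3 (R : realType)
  (dX : nat -> measure_display) (X : forall n, measurableType (dX n))
  (f : forall n, X n -> X n.+1) (mu : forall n, probability (X n) R)
  (dY : nat -> measure_display) (Y : forall n, measurableType (dY n))
  (g : forall n, Y n -> Y n.+1) (nu : forall n, probability (Y n) R)
  (E : set (pseq X)) (F : set (pseq Y)) (pi : forall n, X n -> Y n) :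
  is_mNDS f mu -> is_mNDS g nu ->
  admissible f E -> admissible g F ->
  semiconj f g mu nu E F pi ->
  (hE g nu F <= hE f mu E)%E.
Proof.
move=> _ g_mNDS _ [_ F_pseq _ _ _] [_ pi_mu pi_f F_pullback_E].
apply: ereal_sup_le => _ [Q FQ <-].
exists (fun n => ppre (pi n) (Q n)); first exact: F_pullback_E.
apply: hP_ppre => //; last exact: pi_mu.
- by move=> n; exact: (g_mNDS n).1.
- exact: F_pseq.
Qed.
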